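(* Assume $\mathfrak g$ is semisimple. Let $w\in W$ and let $\Omega$ be a prime ideal of $\mathcal S$ such that $w.\Omega$ is prime and both $P^+\cap\mathcal V(\Omega)$ and $P^+\cap\mathcal V(w.\Omega)$ are nonempty. Then $w\in W^\lambda$, where $\lambda=\lambda_\Omega$.
   Context: $F$ is an algebraically closed field of characteristic zero; $\mathfrak g$ is a semisimple Lie algebra over $F$ with Cartan subalgebra $\mathfrak h$, root system $R$, positive system $R^+$, Weyl group $W$, $\rho=\frac12\sum_{\alpha\in R^+}\alpha$, dot action $w.\xi=w(\xi+\rho)-\rho$; $H_\alpha\in\mathfrak h$ is the coroot of $\alpha$. $\mathcal S=S(\mathfrak h)$ is identified with polynomial functions on $\mathfrak h^*$, with $(w.f)(\xi)=f(w^{-1}.\xi)$ and $w.\Omega=\{w.f:f\in\Omega\}$; $\mathcal V(\Omega)$ is the zero set. For a prime $\Omega$, $\mathbb F$ is the fraction field of $\mathcal S/\Omega$ and $\lambda_\Omega$ the $\mathbb F$-linear extension of $\mathfrak h\hookrightarrow\mathcal S\to\mathcal S/\Omega\hookrightarrow\mathbb F$. $P^+$ is the set of dominant integral weights (those $\mu$ with $\dim L(\mu)<\infty$). For $\lambda=\lambda_\Omega$: $R_\lambda=\{\alpha\in R: H_\alpha-n\in\Omega\text{ for some }n\in\mathbb Z\}$, $R^+_\lambda=R^+\cap R_\lambda$, $B_\lambda$ the simple roots of $R_\lambda$ in $R^+_\lambda$, $W^\lambda=\{w\in W:w(B_\lambda)\subseteq R^+\}$. *)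

From HB Require Import structures.
From mathcomp Require Import all_boot all_order all_algebra.
From mathcomp Require Import mpoly.
From Stdlib Require Import ClassicalDescription.
Set Implicit Arguments. Unset Strict Implicit. Unset Printing Implicit Defensive.
Import Order.TTheory GRing.Theory Num.Theory.
Local Open Scope ring_scope.

(* Conventions: h^* is identified with F^n = 'rV[F]_n via a basis, h with
   its dual F^n, the pairing <xi, H> being sum_i xi_i H_i.  Roots live in
   h^*, coroots H_alpha = cor alpha in h.  W acts on h^* on the right:
   w(xi) = xi *m w.  S = S(h) = polynomial functions on h^* = {mpoly F[n]}. *)

Section RootData.
Variables (F : fieldType) (n : nat).
Implicit Types (xi mu H a b : 'rV[F]_n).

Definition pairing xi H : F := \sum_(i < n) xi 0 i * H 0 i.

Variables (R : seq 'rV[F]_n) (cor : 'rV[F]_n -> 'rV[F]_n).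

Definition refl a xi : 'rV[F]_n := xi - pairing xi (cor a) *: a.

(* Axioms of a reduced (crystallographic) root system spanning h^*,
   i.e. the root system of a semisimple Lie algebra w.r.t. a Cartan
   subalgebra, with its coroots. *)
Definition root_system : Prop :=
  [/\ uniq R, (0 : 'rV[F]_n) \notin R &
      (forall xi, exists c : 'I_(size R) -> F, xi = \sum_(i < size R) c i *: R`_i)] /\
  [/\ (forall a, a \in R -> pairing a (cor a) = 2),
      (forall a b, a \in R -> b \in R -> refl a b \in R),
      (forall a b, a \in R -> b \in R -> exists z : int, pairing b (cor a) = z%:~R)
    & (forall a (c : F), a \in R -> c *: a \in R -> c = 1 \/ c = -1)].

Variable D : seq 'rV[F]_n.

Definition nonneg_comb a : Prop :=
  exists c : 'I_(size D) -> nat, a = \sum_(i < size D) (c i)%:R *: D`_i.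

Definition is_base : Prop :=
  [/\ {subset D <= R},
      (forall c : 'I_(size D) -> F,
          \sum_(i < size D) c i *: D`_i = 0 -> forall i, c i = 0)
    & (forall a, a \in R -> nonneg_comb a \/ nonneg_comb (- a))].

Definition pos_root a : Prop := a \in R /\ nonneg_comb a.

Definition pos_rootb a : bool :=
  if excluded_middle_informative (pos_root a) then true else false.

Definition rho : 'rV[F]_n := 2^-1 *: \sum_(a <- R | pos_rootb a) a.

Definition dot_wt (w : 'M[F]_n) xi : 'rV[F]_n := (xi + rho) *m w - rho.

Definition refl_mx a : 'M[F]_n := 1%:M - (cor a)^T *m a.

Definition in_weyl (w : 'M[F]_n) : Prop :=
  exists s : seq 'rV[F]_n, all (mem R) s /\
    w = foldr (fun a m => refl_mx a *m m) 1%:M s.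

Definition dominant_integral mu : Prop :=
  forall d, d \in D -> exists k : nat, pairing mu (cor d) = k%:R.

Definition ev (f : {mpoly F[n]}) xi : F := f.@[fun i => xi 0 i].

Definition zero_set (Om : {mpoly F[n]} -> Prop) xi : Prop :=
  forall f, Om f -> ev f xi = 0.

Definition prime_ideal (Om : {mpoly F[n]} -> Prop) : Prop :=
  [/\ Om 0,
      (forall f g, Om f -> Om g -> Om (f + g)),
      (forall f g, Om g -> Om (f * g)),
      ~ Om 1
    & (forall f g, Om (f * g) -> Om f \/ Om g)].

(* The element of S = S(h) corresponding to H in h (a linear form on h^* ). *)
Definition hpoly H : {mpoly F[n]} := \sum_(i < n) H 0 i *: 'X_ i.

(* w.f, with (w.f)(xi) = f(w^{-1}.xi), w^{-1}.xi = (xi + rho) w^{-1} - rho. *)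
Definition dot_coord (w : 'M[F]_n) (j : 'I_n) : {mpoly F[n]} :=
  \sum_(i < n) (('X_ i + (rho 0 i)%:MP) * ((invmx w) i j)%:MP) - (rho 0 j)%:MP.

Definition dot_poly (w : 'M[F]_n) (f : {mpoly F[n]}) : {mpoly F[n]} :=
  f \mPo [tuple dot_coord w j | j < n].

Definition dot_ideal (w : 'M[F]_n) (Om : {mpoly F[n]} -> Prop)
  : {mpoly F[n]} -> Prop :=
  fun g => exists2 f, Om f & g = dot_poly w f.

(* R_lambda, R^+_lambda, B_lambda for lambda = lambda_Omega. *)
Definition int_root (Om : {mpoly F[n]} -> Prop) a : Prop :=
  a \in R /\ exists z : int, Om (hpoly (cor a) - z%:~R).

Definition pos_int_root Om a : Prop := int_root Om a /\ pos_root a.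

(* simple roots of R_lambda in R^+_lambda: indecomposable elements. *)
Definition simple_int_root Om a : Prop :=
  pos_int_root Om a /\
  ~ (exists b c, [/\ pos_int_root Om b, pos_int_root Om c & a = b + c]).

Definition in_Wlambda Om (w : 'M[F]_n) : Prop :=
  forall a, simple_int_root Om a -> pos_root (a *m w).

End RootData.

From HB Require Import structures.
From mathcomp Require Import all_boot all_order all_algebra.
From mathcomp Require Import mpoly.
From mathcomp Require Import ring.
From Stdlib Require ClassicalDescription.
Import GRing.Theory.
Local Open Scope ring_scope.
Set Implicit Arguments. Unset Strict Implicit.

(* Let a be a positive root with <lambda, H_a> integral, and suppose that a w is
   negative.  For dominant integral mu in V(Omega) and nu in V(w.Omega), the
   weight mu' = w^-1.nu lies in V(Omega), so <mu, H_a> = <mu', H_a>, and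
   W-invariance of the pairing gives <mu + rho, H_a> = <nu + rho, H_(a w)>.
   As rho pairs to 1 with every simple coroot, mu + rho and nu + rho are
   regular dominant, so the left side is a positive rational number and the
   right side a negative one.  Over an arbitrary field of characteristic 0,
   "positive rational" is obtained from the W-invariant form
   B(x, y) = sum_g <x, H_g> <y, H_g>, through which H_a B(a, a) is a
   nonnegative integral combination of the H_d B(d, d) for simple d. *)

Lemma natr_inj_pchar0 (F : fieldType) : [pchar F] =i pred0 ->
  injective (fun m : nat => m%:R : F).
Proof.
move=> /pcharf0P charF0 m k e.
wlog le_mk : m k e / (m <= k)%N.
  by move=> W; case/orP: (leq_total m k) => ?; [|symmetry]; apply: W.
move/eqP: e; rewrite eq_sym -subr_eq0 -natrB // charF0 subn_eq0 => le_km.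
by apply/eqP; rewrite eqn_leq le_mk le_km.
Qed.

Section Pairing.
Variables (F : fieldType) (n : nat).
Implicit Types (x y h : 'rV[F]_n).

Lemma pairingDl x y h : pairing (x + y) h = pairing x h + pairing y h.
Proof. by rewrite /pairing -big_split; apply: eq_bigr => i _; rewrite mxE mulrDl. Qed.

Lemma pairingZl c x h : pairing (c *: x) h = c * pairing x h.
Proof. by rewrite /pairing mulr_sumr; apply: eq_bigr => i _; rewrite mxE mulrA. Qed.

Lemma pairingBl x y h : pairing (x - y) h = pairing x h - pairing y h.
Proof. by rewrite pairingDl -scaleN1r pairingZl mulN1r. Qed.

Lemma pairing_suml (I : Type) (r : seq I) (P : pred I) (f : I -> 'rV[F]_n) h :
  pairing (\sum_(i <- r | P i) f i) h = \sum_(i <- r | P i) pairing (f i) h.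
Proof.
elim/big_rec2: _ => [|i y1 y2 _ <-]; last by rewrite pairingDl.
by rewrite /pairing big1 // => i _; rewrite mxE mul0r.
Qed.

Lemma pairingZr c x h : pairing h (c *: x) = c * pairing h x.
Proof. by rewrite /pairing mulr_sumr; apply: eq_bigr => i _; rewrite mxE mulrCA. Qed.

Lemma pairingBr x y h : pairing h (x - y) = pairing h x - pairing h y.
Proof.
rewrite /pairing -sumrB; apply: eq_bigr => i _.
by rewrite !mxE mulrBr.
Qed.

End Pairing.

Section Reflections.
Variables (F : fieldType) (n : nat) (cor : 'rV[F]_n -> 'rV[F]_n).
Implicit Types (a x y : 'rV[F]_n).

Lemma mul_refl_mx a x : x *m refl_mx cor a = refl cor a x.
Proof.
apply/rowP => j; rewrite mulmxBr mulmx1 mulmxA !mxE; congr (_ - _).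
by rewrite big_ord1 !mxE; congr (_ * _); apply: eq_bigr => i _; rewrite mxE.
Qed.

Lemma reflB a x y : refl cor a (x - y) = refl cor a x - refl cor a y.
Proof. by rewrite -!mul_refl_mx mulmxBl. Qed.

Lemma reflZ a c x : refl cor a (c *: x) = c *: refl cor a x.
Proof. by rewrite -!mul_refl_mx scalemxAl. Qed.

Lemma refl_sum a (I : Type) (r : seq I) (P : pred I) (f : I -> 'rV[F]_n) :
  refl cor a (\sum_(i <- r | P i) f i) = \sum_(i <- r | P i) refl cor a (f i).
Proof.
by rewrite -mul_refl_mx mulmx_suml; apply: eq_bigr => i _; rewrite mul_refl_mx.
Qed.

Variable a : 'rV[F]_n.
Hypothesis a_coroot : pairing a (cor a) = 2.

Lemma refl_self : refl cor a a = - a.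
Proof.
by rewrite /refl a_coroot -{1}(scale1r a) -scalerBl -scaleN1r; congr (_ *: _); ring.
Qed.

Lemma reflK : involutive (refl cor a).
Proof.
move=> x; rewrite /refl pairingBl pairingZl a_coroot -!scaleNr -addrA -scalerDl.
by rewrite [X in X *: a](_ : _ = 0) ?scale0r ?addr0 //; ring.
Qed.

Lemma refl_mxK : refl_mx cor a *m refl_mx cor a = 1%:M.
Proof.
by apply/row_matrixP => i; rewrite row_mul rowE !mul_refl_mx reflK rowE mulmx1.
Qed.

End Reflections.

(* Bourbaki's uniqueness of the coroot: if two reflections along [a] stabilise
   the finite spanning set [R], their composite is a translation by a multiple
   of [a] preserving [R], which forces the multiple to vanish in characteristic 0. *)
Lemma coroot_unique (F : fieldType) n (R : seq 'rV[F]_n) (a h h' : 'rV[F]_n) :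
  [pchar F] =i pred0 ->
  (forall xi, exists c : 'I_(size R) -> F, xi = \sum_(i < size R) c i *: R`_i) ->
  a != 0 -> pairing a h = 2 -> pairing a h' = 2 ->
  (forall g, g \in R -> g - pairing g h *: a \in R) ->
  (forall g, g \in R -> g - pairing g h' *: a \in R) ->
  forall y, pairing y h = pairing y h'.
Proof.
move=> charF0 R_span a0 ha ha' Rh Rh'.
suff onR g : g \in R -> pairing g h = pairing g h'.
  move=> y; have [c ->] := R_span y; rewrite !pairing_suml.
  by apply: eq_bigr => i _; rewrite !pairingZl onR // mem_nth.
move=> gR; apply/eqP; rewrite eq_sym -subr_eq0; apply/negPn/negP => c0.
set c := pairing g h' - pairing g h in c0.
pose t m : 'rV[F]_n := g + (m%:R * c) *: a.
have tR m : t m \in R.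
  elim: m => [|m IH]; first by rewrite /t mul0r scale0r addr0.
  have := Rh _ (Rh' _ IH); set v := t m.
  suff -> : v - pairing v h' *: a - pairing (v - pairing v h' *: a) h *: a
            = t m.+1 by [].
  rewrite /v /t !pairingBl !pairingDl !pairingZl ha ha' -!addrA.
  congr (_ + _); rewrite -!scaleNr -!scalerDl; congr (_ *: _).
  by rewrite /c -addn1 natrD; ring.
have t_inj : injective t.
  move=> m1 m2 /addrI /eqP; rewrite -subr_eq0 -scalerBl scaler_eq0 (negPf a0).
  rewrite orbF -mulrBl mulf_eq0 (negPf c0) orbF subr_eq0 => /eqP.
  exact: natr_inj_pchar0.
have t_R : {subset map t (iota 0 (size R).+1) <= R} by move=> x /mapP [m _ ->].
have := uniq_leq_size _ t_R.
by rewrite map_inj_uniq // iota_uniq size_map size_iota ltnn => /(_ isT).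
Qed.

Section RootSystem.
Variables (F : fieldType) (n : nat) (R : seq 'rV[F]_n) (cor : 'rV[F]_n -> 'rV[F]_n).
Hypotheses (charF0 : [pchar F] =i pred0) (RS : root_system R cor).
Implicit Types (a b x y : 'rV[F]_n).

Lemma root_uniq : uniq R.
Proof. by case: RS => [[]]. Qed.

Lemma root_neq0 a : a \in R -> a != 0.
Proof. by case: RS => [[_ R0 _] _] aR; apply: contraNneq R0 => <-. Qed.

Lemma roots_span x : exists c : 'I_(size R) -> F, x = \sum_(i < size R) c i *: R`_i.
Proof. by case: RS => [[_ _]]. Qed.

Lemma pairing_root_coroot a : a \in R -> pairing a (cor a) = 2.
Proof. by case: RS => _ [h _ _ _]; apply: h. Qed.

Lemma refl_root a b : a \in R -> b \in R -> refl cor a b \in R.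
Proof. by case: RS => _ [_ h _ _]; apply: h. Qed.

Lemma pairing_root_coroot_int a b :
  a \in R -> b \in R -> exists z : int, pairing b (cor a) = z%:~R.
Proof. by case: RS => _ [_ _ h _]; apply: h. Qed.

Lemma root_reduced a c : a \in R -> c *: a \in R -> c = 1 \/ c = -1.
Proof. by case: RS => _ [_ _ _ h]; apply: h. Qed.

Lemma reflK_root a : a \in R -> involutive (refl cor a).
Proof. by move=> aR; apply/reflK/pairing_root_coroot. Qed.

Lemma oppr_root a : a \in R -> - a \in R.
Proof. by move=> aR; rewrite -(refl_self (pairing_root_coroot aR)) refl_root. Qed.

Lemma refl_root_perm a : a \in R -> perm_eq (map (refl cor a) R) R.
Proof.
move=> aR; have refl_inj := can_inj (reflK_root aR).
have uniq_img : uniq (map (refl cor a) R) by rewrite map_inj_uniq ?root_uniq.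
have sub_img : {subset map (refl cor a) R <= R}.
  by move=> x /mapP [g gR ->]; apply: refl_root.
have [_ same_img] := uniq_min_size uniq_img sub_img (eq_leq (esym (size_map _ _))).
by rewrite uniq_perm ?root_uniq.
Qed.

(* [cor b - <a, cor b> cor a] is a coroot for [refl a b], so by uniqueness it
   represents [cor (refl a b)]. *)
Lemma pairing_refl_coroot a b x : a \in R -> b \in R ->
  pairing (refl cor a x) (cor (refl cor a b)) = pairing x (cor b).
Proof.
move=> aR bR; set b' := refl cor a b; have b'R : b' \in R by exact: refl_root.
pose h := cor b - pairing a (cor b) *: cor a.
have pairing_h y : pairing y h = pairing (refl cor a y) (cor b).
  by rewrite /h /refl pairingBr pairingZr pairingBl pairingZl; ring.
rewrite (@coroot_unique _ _ R b' (cor b') h charF0 roots_span).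
- by rewrite pairing_h reflK_root.
- exact: root_neq0.
- exact: pairing_root_coroot.
- by rewrite pairing_h reflK_root ?pairing_root_coroot.
- by move=> g gR; apply: refl_root.
move=> g gR; rewrite pairing_h.
suff -> : g - pairing (refl cor a g) (cor b) *: b'
          = refl cor a (refl cor b (refl cor a g)) by do ?apply: refl_root.
by rewrite [refl cor b _]/refl reflB reflZ reflK_root.
Qed.

Lemma pairing_coroot_opp a x : a \in R -> pairing x (cor (- a)) = - pairing x (cor a).
Proof.
move=> aR; rewrite -{1}(reflK_root aR x) -(refl_self (pairing_root_coroot aR)).
rewrite pairing_refl_coroot // /refl pairingBl pairingZl pairing_root_coroot //.
ring.
Qed.

Definition root_form x y : F :=
  \sum_(g <- R) pairing x (cor g) * pairing y (cor g).

Lemma root_form_refl a x y : a \in R ->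
  root_form (refl cor a x) (refl cor a y) = root_form x y.
Proof.
move=> aR; rewrite /root_form -[in LHS](perm_big _ (refl_root_perm aR)) big_map.
by apply: eq_big_seq => g gR; rewrite !pairing_refl_coroot.
Qed.

Lemma root_formBl x u c y :
  root_form (x - c *: u) y = root_form x y - c * root_form u y.
Proof.
rewrite /root_form mulr_sumr -sumrB; apply: eq_bigr => g _.
by rewrite pairingBl pairingZl; ring.
Qed.

Lemma root_formNr x y : root_form x (- y) = - root_form x y.
Proof.
rewrite /root_form -sumrN; apply: eq_bigr => g _.
by rewrite -scaleN1r pairingZl; ring.
Qed.

Lemma root_form_sumr x m (c : 'I_m -> F) (v : 'I_m -> 'rV[F]_n) :
  root_form x (\sum_(i < m) c i *: v i) = \sum_(i < m) c i * root_form x (v i).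
Proof.
rewrite /root_form; under eq_bigr => g _ do rewrite pairing_suml big_distrr.
rewrite exchange_big; apply: eq_bigr => i _; rewrite mulr_sumr.
by apply: eq_bigr => g _; rewrite pairingZl mulrCA.
Qed.

(* Invariance under [refl a] applied to the pair [(x, a)], with [refl a a = - a]. *)
Lemma root_form_coroot a x : a \in R ->
  2 * root_form x a = pairing x (cor a) * root_form a a.
Proof.
move=> aR; have := root_form_refl x a aR.
rewrite (refl_self (pairing_root_coroot aR)) root_formNr /refl root_formBl.
move=> e; rewrite (_ : 2 * _ = root_form x a + root_form x a); last by ring.
by rewrite -{2}e; ring.
Qed.

Lemma coroot_comb m (v : 'I_m -> 'rV[F]_n) (c : 'I_m -> F) a x :
  (forall i, v i \in R) -> a \in R -> a = \sum_(i < m) c i *: v i ->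
  pairing x (cor a) * root_form a a =
    \sum_(i < m) c i * (pairing x (cor (v i)) * root_form (v i) (v i)).
Proof.
move=> vR aR ea; rewrite -root_form_coroot //.
under [RHS]eq_bigr => i _ do rewrite -root_form_coroot //.
by rewrite {1}ea root_form_sumr mulr_sumr; apply: eq_bigr => i _; ring.
Qed.

Lemma intr_sqr_nat (z : int) : exists k : nat, (z%:~R * z%:~R : F) = k%:R.
Proof.
case: z => k; first by exists (k * k)%N; rewrite natrM.
by exists (k.+1 * k.+1)%N; rewrite NegzE mulrNz mulrNN natrM.
Qed.

Lemma root_form_root_nat a : a \in R ->
  exists2 N : nat, root_form a a = N%:R & (0 < N)%N.
Proof.
move=> aR; suff [N [eN N_pos]] : exists N : nat,
    \sum_(g <- R) pairing a (cor g) * pairing a (cor g) = N%:R /\ (a \in R -> 0 < N)%N.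
  by exists N; [exact: eN | exact: N_pos].
have : {subset R <= R} by [].
elim: {-2}R => [|g s IH] sR; first by exists 0%N; rewrite big_nil.
have gR : g \in R by apply: sR; rewrite mem_head.
have [N [eN N_pos]] := IH (fun x xs => sR x (@mem_behead _ (g :: s) x xs)).
rewrite big_cons eN; have [->|ga] := eqVneq g a.
  by exists (4 + N)%N; split=> //; rewrite pairing_root_coroot // natrD; ring.
have [z ez] := pairing_root_coroot_int gR aR; have [k ek] := intr_sqr_nat z.
exists (k + N)%N; rewrite ez ek natrD; split=> //.
by rewrite inE eq_sym (negPf ga) => /N_pos; rewrite addn_gt0 orbC => ->.
Qed.

Section Weyl.
Variable w : 'M[F]_n.
Hypothesis weyl_w : in_weyl R cor w.

Lemma weyl_unit : w \in unitmx.
Proof.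
case: weyl_w => s [sR ->]; elim: s sR => [|b s IH] /=; first by rewrite unitmx1.
case/andP=> bR /IH; rewrite unitmx_mul => ->; rewrite andbT.
by case: (mulmx1_unit (refl_mxK (pairing_root_coroot bR))).
Qed.

Lemma weyl_root a : a \in R -> a *m w \in R.
Proof.
case: weyl_w => s [sR ->]; elim: s sR a => [|b s IH] /= sR a aR.
  by rewrite mulmx1.
by case/andP: sR => bR /IH sR; rewrite mulmxA mul_refl_mx sR ?refl_root.
Qed.

Lemma weyl_pairing_coroot a x : a \in R ->
  pairing (x *m w) (cor (a *m w)) = pairing x (cor a).
Proof.
case: weyl_w => s [sR ->]; elim: s sR a x => [|b s IH] /= sR a x aR.
  by rewrite !mulmx1.
case/andP: sR => bR /IH sR.
by rewrite !mulmxA !mul_refl_mx sR ?refl_root ?pairing_refl_coroot.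
Qed.

End Weyl.

End RootSystem.

Lemma nth_delta_comb (F : fieldType) n (D : seq 'rV[F]_n) (j : 'I_(size D)) :
  D`_j = \sum_(i < size D) (i == j)%:R *: D`_i.
Proof.
by rewrite (bigD1 j) //= eqxx scale1r big1 ?addr0 // => i /negPf ->; rewrite scale0r.
Qed.

Definition pos_rational (F : fieldType) (x : F) : Prop :=
  exists N P : nat, [/\ (0 < N)%N, (0 < P)%N & x * N%:R = P%:R].

Lemma pos_rational_opp (F : fieldType) (x : F) : [pchar F] =i pred0 ->
  pos_rational x -> ~ pos_rational (- x).
Proof.
move=> /pcharf0P charF0 [N [P [N_pos P_pos eP]]] [M [Q [M_pos Q_pos eQ]]].
have sum0 : ((P * M + Q * N)%N%:R : F) = 0 by rewrite natrD !natrM -eP -eQ; ring.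
by move/eqP: sum0; rewrite charF0 addn_eq0 muln_eq0 !eqn0Ngt P_pos M_pos.
Qed.

Section Base.
Variables (F : fieldType) (n : nat) (R : seq 'rV[F]_n) (cor : 'rV[F]_n -> 'rV[F]_n).
Variable D : seq 'rV[F]_n.
Hypotheses (charF0 : [pchar F] =i pred0) (RS : root_system R cor) (base : is_base R D).
Implicit Types (a x : 'rV[F]_n).

Lemma base_root (j : 'I_(size D)) : D`_j \in R.
Proof. by case: base => DR _ _; apply/DR/mem_nth. Qed.

Lemma root_sign a : a \in R -> nonneg_comb D a \/ nonneg_comb D (- a).
Proof. by case: base => _ _; apply. Qed.

Lemma base_coord_inj (u v : 'I_(size D) -> F) :
  \sum_(i < size D) u i *: D`_i = \sum_(i < size D) v i *: D`_i -> u =1 v.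
Proof.
case: base => _ indep _ e i; apply/eqP; rewrite -subr_eq0; apply/eqP.
apply: (indep (fun i => u i - v i)).
by under eq_bigr => k _ do rewrite scalerBl; rewrite sumrB e subrr.
Qed.

Lemma pos_rootbP a : reflect (pos_root R D a) (pos_rootb R D a).
Proof.
by rewrite /pos_rootb; case: ClassicalDescription.excluded_middle_informative;
  constructor.
Qed.

Lemma natr_neqN1 (k : nat) : (k%:R : F) != -1.
Proof.
by rewrite -subr_eq0 opprK natr1 (pcharf0P _).1.
Qed.

Lemma pos_root_other_coord (j : 'I_(size D)) a (c : 'I_(size D) -> nat) :
  a \in R -> a = \sum_(i < size D) (c i)%:R *: D`_i -> a != D`_j ->
  exists2 i, i != j & c i != 0%N.
Proof.
move=> aR ea a_neq; apply/exists_inP; apply: contraNT a_neq => /exists_inPn c0.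
have ea' : a = (c j)%:R *: D`_j.
  rewrite ea (bigD1 j) //= big1 ?addr0 // => i ij.
  by move/negPn: (c0 i ij) => /eqP ->; rewrite scale0r.
have := @root_reduced _ _ _ _ RS _ (c j)%:R (base_root j); rewrite -ea'.
case=> // [c1|cN1]; first by rewrite ea' c1 scale1r.
by have := natr_neqN1 (c j); rewrite cN1 eqxx.
Qed.

(* The coefficient of [D`_i], [i != j], in [refl D`_j a] is still [c i > 0], so
   the root [refl D`_j a] cannot be negative, nor equal to [D`_j]. *)
Lemma refl_simple_pos_root (j : 'I_(size D)) a : pos_root R D a -> a != D`_j ->
  pos_root R D (refl cor D`_j a) /\ refl cor D`_j a != D`_j.
Proof.
move=> [aR [c ea]] a_neq.
have [z ez] := pairing_root_coroot_int RS (base_root j) aR.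
have ra : refl cor D`_j a = \sum_(i < size D) ((c i)%:R - z%:~R * (i == j)%:R) *: D`_i.
  rewrite /refl ez {1}ea [X in _ *: X]nth_delta_comb scaler_sumr -sumrB.
  by apply: eq_bigr => i _; rewrite scalerA scalerBl.
have [i ij ci] := pos_root_other_coord aR ea a_neq.
have raR : refl cor D`_j a \in R by apply/refl_root/aR/base_root.
have opp_comb (e : 'I_(size D) -> nat) b : - b = \sum_(k < size D) (e k)%:R *: D`_k ->
    b = \sum_(k < size D) (- (e k)%:R) *: D`_k.
  by move=> eb; rewrite -[b]opprK eb -sumrN; apply: eq_bigr => k _; rewrite scaleNr.
split; last first.
  apply: contraTneq isT => e.
  have : - a = \sum_(k < size D) (k == j)%:R *: D`_k.
    rewrite -nth_delta_comb -[a](reflK_root RS (base_root j)) e.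
    by rewrite refl_self ?opprK // (pairing_root_coroot RS (base_root j)).
  move/opp_comb; rewrite {1}ea => /base_coord_inj /(_ j).
  by rewrite eqxx => cN1; have := natr_neqN1 (c j); rewrite cN1 eqxx.
split=> //; case: (root_sign raR) => // [[e /opp_comb]].
rewrite ra => /base_coord_inj /(_ i); rewrite (negPf ij) mulr0 subr0 => /eqP.
rewrite -subr_eq0 opprK -natrD (pcharf0P _).1 // addn_eq0 => /andP [/eqP ci0 _].
by move: ci; rewrite ci0.
Qed.

(* [refl D`_j] permutes the positive roots other than [D`_j] and negates
   [D`_j], so it maps [2 rho] to [2 rho - 2 D`_j]. *)
Lemma pairing_rho_simple (j : 'I_(size D)) : pairing (rho R D) (cor D`_j) = 1.
Proof.
set d := D`_j; have dR : d \in R := base_root j.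
set P := [seq a <- R | pos_rootb R D a]; set P' := [seq a <- P | a != d].
set S := \sum_(a <- R | pos_rootb R D a) a.
have SP : S = \sum_(a <- P) a by rewrite big_filter.
have dP : d \in P.
  rewrite mem_filter dR andbT; apply/pos_rootbP; split=> //.
  by exists (fun i => nat_of_bool (i == j)); exact: nth_delta_comb.
have uP : uniq P by apply/filter_uniq/(root_uniq RS).
have uP' : uniq P' by apply/filter_uniq.
have perm_P' : perm_eq (map (refl cor d) P') P'.
  have uniq_img : uniq (map (refl cor d) P').
    by rewrite (map_inj_uniq (can_inj (reflK_root RS dR))).
  have sub_img : {subset map (refl cor d) P' <= P'}.
    move=> x /mapP [a]; rewrite !mem_filter => /andP [ad /andP [/pos_rootbP pa aR]] ->.
    have [pr rd] := refl_simple_pos_root pa ad.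
    by rewrite rd /=; apply/andP; split; [apply/pos_rootbP | case: pr].
  have [_ same_img] := uniq_min_size uniq_img sub_img (eq_leq (esym (size_map _ _))).
  exact: uniq_perm.
have S_split : S = d + \sum_(a <- P') a by rewrite SP (bigD1_seq d) //= big_filter.
have refl_S : refl cor d S = - d + \sum_(a <- P') a.
  rewrite SP refl_sum (bigD1_seq d) //= refl_self ?(pairing_root_coroot RS dR) //.
  congr (_ + _); rewrite -big_filter -/P' -[RHS](perm_big _ perm_P') big_map //.
have pairing_S : pairing S (cor d) *: d = 2 *: d.
  rewrite (_ : pairing S (cor d) *: d = S - refl cor d S); last first.
    by rewrite /refl opprB addrC subrK.
  by rewrite {1}S_split refl_S opprD opprK addrACA subrr addr0 scaler_nat mulr2n.
have two_neq0 : (2 : F) != 0 by rewrite (pcharf0P _).1.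
move/eqP: pairing_S; rewrite -subr_eq0 -scalerBl scaler_eq0 (negPf (root_neq0 RS dR)).
by rewrite orbF subr_eq0 /rho -/S pairingZl => /eqP ->; rewrite mulVf.
Qed.

Definition regular_dominant x : Prop :=
  forall d, d \in D -> exists k : nat, pairing x (cor d) = k.+1%:R.

Lemma dominant_rho_regular mu :
  dominant_integral cor D mu -> regular_dominant (mu + rho R D).
Proof.
move=> mu_dom d dD; have [k ek] := mu_dom d dD; exists k.
by rewrite pairingDl ek -(nth_index 0 dD) (pairing_rho_simple (Ordinal _)) ?index_mem // natr1.
Qed.

(* Writing [cor a] as a positive combination of the [cor D`_i] through the
   invariant form, all pairings become positive integers up to the positive
   integral factors [root_form b b]. *)
Lemma pos_root_pairing x a : regular_dominant x -> pos_root R D a ->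
  pos_rational (pairing x (cor a)).
Proof.
move=> x_reg [aR [c ea]].
have /fin_all_exists [k ek] :
    forall i : 'I_(size D), exists k : nat, pairing x (cor D`_i) = k.+1%:R.
  by move=> i; apply/x_reg/mem_nth.
have /fin_all_exists [N eN] : forall i : 'I_(size D),
    exists N : nat, root_form R cor D`_i D`_i = N%:R /\ (0 < N)%N.
  by move=> i; have [m em m_pos] := root_form_root_nat RS (base_root i); exists m.
have [Na eNa Na_pos] := root_form_root_nat RS aR.
have [i ci] : exists i : 'I_(size D), c i != 0%N.
  apply/existsP; apply: contraTT (root_neq0 RS aR) => /existsPn c0.
  by rewrite negbK ea big1 // => i _; move/negPn/eqP: (c0 i) => ->; rewrite scale0r.
exists Na, (\sum_(i < size D) c i * (k i).+1 * N i)%N; split=> //.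
  rewrite lt0n sum_nat_eq0 negb_forall; apply/existsP; exists i.
  by rewrite /= !muln_eq0 (negPf ci) -lt0n (eN i).2.
rewrite -eNa (coroot_comb charF0 RS x base_root aR ea) natr_sum.
by apply: eq_bigr => l _; rewrite ek (eN l).1 !natrM mulrA.
Qed.

End Base.

Lemma ev_dot_poly (F : fieldType) n (R D : seq 'rV[F]_n) w f (nu : 'rV[F]_n) :
  ev (dot_poly R D w f) nu = ev f ((nu + rho R D) *m invmx w - rho R D).
Proof.
rewrite /ev /dot_poly comp_mpoly_meval; apply: meval_eq => j.
rewrite tnth_mktuple /dot_coord mevalB mevalC (big_morph _ (mevalD _) (meval0 _)).
rewrite !mxE; congr (_ - _); apply: eq_bigr => i _.
by rewrite mevalM mevalD mevalXU !mevalC !mxE.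
Qed.

Lemma zero_set_dot_ideal (F : fieldType) n (R D : seq 'rV[F]_n) w Om nu :
  zero_set (dot_ideal R D w Om) nu ->
  zero_set Om ((nu + rho R D) *m invmx w - rho R D).
Proof. by move=> nu0 f Om_f; rewrite -ev_dot_poly; apply: nu0; exists f. Qed.

Lemma zero_set_pairing (F : fieldType) n (Om : {mpoly F[n]} -> Prop) H xi (z : int) :
  zero_set Om xi -> Om (hpoly H - z%:~R) -> pairing xi H = z%:~R.
Proof.
move=> xi0 /xi0; rewrite /ev mevalB rmorph_int => /eqP; rewrite subr_eq0 => /eqP <-.
rewrite /hpoly (big_morph _ (mevalD _) (meval0 _)) /pairing.
by apply: eq_bigr => i _; rewrite mevalZ mevalXU mulrC.
Qed.

Unset Implicit Arguments.

Theorem mainTheorem14 (F : closedFieldType) (n : nat)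
    (R : seq 'rV[F]_n) (cor : 'rV[F]_n -> 'rV[F]_n) (D : seq 'rV[F]_n)
    (w : 'M[F]_n) (Om : {mpoly F[n]} -> Prop) :
  [pchar F] =i pred0 ->
  root_system R cor ->
  is_base R D ->
  in_weyl R cor w ->
  prime_ideal Om ->
  prime_ideal (dot_ideal R D w Om) ->
  (exists mu, dominant_integral cor D mu /\ zero_set Om mu) ->
  (exists mu, dominant_integral cor D mu /\
              zero_set (dot_ideal R D w Om) mu) ->
  in_Wlambda R cor D Om w.
Proof.
move=> charF0 RS base weyl_w _ _ [mu [mu_dom mu0]] [nu [nu_dom nu0]].
move=> a [[[aR [z Om_a]] a_pos] _].
have awR := weyl_root RS weyl_w aR.
case: (root_sign base awR) => [aw_pos | aw_neg]; first by [].
exfalso; set rh := rho R D.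
set mu' := (nu + rh) *m invmx w - rh.
have mu'0 : zero_set Om mu' := zero_set_dot_ideal nu0.
have mu'_shift : (mu' + rh) *m w = nu + rh by rewrite subrK mulmxKV ?(weyl_unit RS weyl_w).
have same_pairing : pairing (mu + rh) (cor a) = pairing (nu + rh) (cor (a *m w)).
  rewrite -mu'_shift (weyl_pairing_coroot charF0 RS weyl_w _ aR) (pairingDl mu) (pairingDl mu').
  by rewrite (zero_set_pairing mu0 Om_a) (zero_set_pairing mu'0 Om_a).
apply: (pos_rational_opp charF0 (pos_root_pairing charF0 RS base
          (dominant_rho_regular charF0 RS base mu_dom) a_pos)).
rewrite same_pairing -(pairing_coroot_opp charF0 RS _ awR).
apply: (pos_root_pairing charF0 RS base (dominant_rho_regular charF0 RS base nu_dom)).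
by split; [exact: oppr_root RS _ awR | exact: aw_neg].
Qed.
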